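(* Let $\mathcal{H}$ be an infinite dimensional complex Hilbert space and let $\phi:\mathcal{B}(\mathcal{H})\to\mathcal{B}(\mathcal{H})$ be a bijective map preserving the Douglas solution in both directions. Then for every $B\in\mathcal{B}(\mathcal{H})$: $\ker B=\{0\}$ if and only if $\ker\phi(B)=\{0\}$.
   Context: $\mathcal{B}(\mathcal{H})$ denotes the algebra of all bounded linear operators on $\mathcal{H}$. For $A,B\in\mathcal{B}(\mathcal{H})$ with $\operatorname{ran}A\subseteq\operatorname{ran}B$, the Douglas solution of $A=BX$ is the unique $D\in\mathcal{B}(\mathcal{H})$ with $BD=A$ and $\operatorname{ran}D\subseteq(\ker B)^\perp$. A map $\phi:\mathcal{B}(\mathcal{H})\to\mathcal{B}(\mathcal{H})$ preserves the Douglas solution in both directions if for all $A,B,X\in\mathcal{B}(\mathcal{H})$: $X$ is the Douglas solution of $A=BX$ if and only if $\phi(X)$ is the Douglas solution of $\phi(A)=\phi(B)Y$. *)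

From mathcomp Require Import all_boot all_algebra.
From mathcomp Require Import complex reals.
Set Implicit Arguments. Unset Strict Implicit. Unset Printing Implicit Defensive.
Import GRing.Theory Num.Theory.
Local Open Scope ring_scope.

Section Hilbert.
Variable R : realType.
Variable H : lmodType R[i].
Variable ip : H -> H -> R[i].   (* inner product, linear in the 1st argument *)

Definition ipnorm (x : H) : R[i] := sqrtC (ip x x).

Definition is_inner_product : Prop :=
  [/\ (forall a x y z, ip (a *: x + y) z = a * ip x z + ip y z),
      (forall x y, ip x y = (ip y x)^*),
      (forall x, 0 <= ip x x) &
      (forall x, ip x x = 0 -> x = 0)].

Definition ip_complete : Prop :=
  forall u : nat -> H,
    (forall e : R, 0 < e -> exists N, forall m n, (N <= m)%N -> (N <= n)%N ->
        ipnorm (u m - u n) < e%:C%C) ->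
    exists l : H, forall e : R, 0 < e -> exists N, forall n, (N <= n)%N ->
        ipnorm (u n - l) < e%:C%C.

Definition hilbert_space : Prop := is_inner_product /\ ip_complete.

Definition infinite_dimensional : Prop :=
  forall n : nat, exists v : 'I_n -> H,
    forall c : 'I_n -> R[i], \sum_(k < n) c k *: v k = 0 -> forall k, c k = 0.

Definition is_bounded_linear (T : H -> H) : Prop :=
  (forall (a : R[i]) x y, T (a *: x + y) = a *: T x + T y) /\
  exists M : R, forall x, ipnorm (T x) <= M%:C%C * ipnorm x.

Record bop := Bop { bop_fun :> H -> H; bop_bounded : is_bounded_linear bop_fun }.

Definition kernel (T : H -> H) : H -> Prop := fun x => T x = 0.
Definition range (T : H -> H) : H -> Prop := fun y => exists x, T x = y.
Definition orth (S : H -> Prop) : H -> Prop := fun y => forall x, S x -> ip y x = 0.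

Definition douglas_solution (X A B : bop) : Prop :=
  (forall x, B (X x) = A x) /\
  (forall y, range X y -> orth (kernel B) y).

Definition preserves_douglas_both (phi : bop -> bop) : Prop :=
  forall A B X : bop,
    douglas_solution X A B <-> douglas_solution (phi X) (phi A) (phi B).

Definition trivial_kernel (T : H -> H) : Prop := forall x, kernel T x -> x = 0.
End Hilbert.

From mathcomp Require Import all_boot all_algebra.
From mathcomp Require Import all_order complex reals.
Import Order.TTheory GRing.Theory Num.Theory.
Set Implicit Arguments. Unset Strict Implicit. Unset Printing Implicit Defensive.
Local Open Scope ring_scope.

(* Injectivity of B is expressible purely in terms of
   Douglas solutions: ker B = {0} iff every operator X is the Douglas solution
   of some equation A = B Y.
   - If ker B = {0}, then (ker B)^⊥ = H, so X is the Douglas solution of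
     B X = B Y (take A := B X).
   - Conversely, if the identity is the Douglas solution of some A = B Y, then
     every x in ker B lies in ran I ⊆ (ker B)^⊥, so <x, x> = 0 and x = 0.
   A bijection preserving Douglas solutions in both directions preserves this
   "every X is a Douglas solution with coefficient B" property, which gives the
   theorem. *)

Section DouglasKernel.
Variable R : realType.
Variable H : lmodType R[i].
Variable ip : H -> H -> R[i].
Hypothesis hip : is_inner_product ip.

Lemma ipnorm_ge0 (x : H) : 0 <= ipnorm ip x.
Proof. by rewrite /ipnorm sqrtC_ge0; case: hip. Qed.

Lemma bounded_nonneg_bound (T : H -> H) : is_bounded_linear ip T ->
  exists2 M : R, 0 <= M & forall x, ipnorm ip (T x) <= M%:C%C * ipnorm ip x.
Proof.
case=> _ [M HM]; exists `|M| => // x.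
apply: le_trans (HM x) _; apply: ler_wpM2r; first exact: ipnorm_ge0.
by rewrite lecR ler_norm.
Qed.

Lemma comp_bounded (T S : H -> H) : is_bounded_linear ip T ->
  is_bounded_linear ip S -> is_bounded_linear ip (fun x => T (S x)).
Proof.
move=> hT hS; split; first by move=> a x y; rewrite hS.1 hT.1.
have [MT MT0 HT] := bounded_nonneg_bound hT.
have [MS _ HS] := bounded_nonneg_bound hS.
exists (MT * MS) => x; apply: le_trans (HT (S x)) _.
rewrite rmorphM -mulrA; apply: ler_wpM2l; first by rewrite lecR.
exact: HS.
Qed.

Lemma id_bounded : is_bounded_linear ip (fun x => x).
Proof. by split => //; exists 1 => x; rewrite mul1r. Qed.

Definition bop_comp (T S : bop ip) : bop ip :=
  Bop (comp_bounded (bop_bounded T) (bop_bounded S)).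

Definition bop_id : bop ip := Bop id_bounded.

Lemma ip_r0 (y : H) : ip y 0 = 0.
Proof.
case: hip => lin sym _ _.
have ip0y : ip 0 y = 0.
  have := lin 1 0 0 y; rewrite scaler0 addr0 mul1r.
  by rewrite -{1}[ip 0 y]addr0 => /addrI.
by rewrite sym ip0y conjC0.
Qed.

Definition all_douglas (B : bop ip) : Prop :=
  forall X : bop ip, exists A : bop ip, douglas_solution X A B.

Lemma trivial_kernelE (B : bop ip) : trivial_kernel B <-> all_douglas B.
Proof.
split=> [injB X | univB x Bx0].
  exists (bop_comp B X); split=> // y _ x Bx0.
  by rewrite (injB x Bx0) ip_r0.
have [A [_ ranI_orth]] := univB bop_id.
have xx0 : ip x x = 0 := ranI_orth x (ex_intro _ x erefl) x Bx0.
by case: hip => _ _ _; apply.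
Qed.

End DouglasKernel.

Lemma all_douglas_preserved (R : realType) (H : lmodType R[i])
  (ip : H -> H -> R[i]) (phi : bop ip -> bop ip) :
  bijective phi -> preserves_douglas_both phi ->
  forall B : bop ip, all_douglas B <-> all_douglas (phi B).
Proof.
case=> psi phiK psiK pres B; split=> [univB X | univB X].
  have [A hA] := univB (psi X).
  by exists (phi A); rewrite -(psiK X); exact: (pres _ _ _).1 hA.
have [A hA] := univB (phi X).
by exists (psi A); apply/(pres (psi A) B X); rewrite psiK.
Qed.

Theorem claim2 (R : realType) (H : lmodType R[i]) (ip : H -> H -> R[i])
  (hH : hilbert_space ip) (hinf : infinite_dimensional H)
  (phi : bop ip -> bop ip) (phi_bij : bijective phi)
  (phi_pres : preserves_douglas_both phi) :
  forall B : bop ip, trivial_kernel B <-> trivial_kernel (phi B).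
Proof.
move=> B; have hip := hH.1.
rewrite !(trivial_kernelE hip).
exact: all_douglas_preserved.
Qed.
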